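(* Let $d\geq 3$ and $k\geq 1$, and let $P_{d,k}(t)=\sum_{n\geq 1}p_{d,k,n}t^n$, where $p_{d,k,n}$ is the number of directed plateau polyhypercubes of dimension $d$, width $k$ and lateral area $n$. Then $$P_{d,k}(t)=\frac{t^{k(d-1)}}{(1-t)^{2k(d-1)-(d-1)}}.$$
   Context: Work in $\mathbb{Z}^d$ with orthonormal coordinate system $(0,\vec{i_1},\dots,\vec{i_d})$; a cell is a unit hypercube of the lattice. A polyhypercube of dimension $d$ is a finite union of cells, connected through their $(d-1)$-dimensional faces, defined up to translation. Its width is the number of distinct values of the $\vec{i_1}$-coordinate taken by its cells; its strata are its intersections with the layers of constant $\vec{i_1}$-coordinate. A plateau is a stratum that is a hyperrectangle. An elementary step is a positive move of one unit along one axis. A polyhypercube is directed if every cell can be reached from a distinguished root cell by a path of cells of the polyhypercube using only elementary steps. A directed plateau polyhypercube is a directed polyhypercube all of whose strata are plateaus. The lateral area of a polyhypercube is the sum, over $2\leq l\leq d$, of the areas (numbers of unit squares) of the polyominoes obtained by projecting it onto the planes $(\vec{i_1},\vec{i_l})$. Generating functions are formal power series in $t$. *)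

From HB Require Import structures.
From mathcomp Require Import all_boot all_order all_algebra.
From mathcomp Require Import finmap.
Set Implicit Arguments. Unset Strict Implicit. Unset Printing Implicit Defensive.
Import Order.TTheory GRing.Theory Num.Theory.
Local Open Scope ring_scope.


(* A cell of Z^d is identified with the lattice point of its lower corner.
   We split Z^d = Z x Z^(d-1): the first component is the i_1 coordinate,
   the second gives the coordinates along i_2, ..., i_d. *)
Definition cell (d : nat) := (int * {ffun 'I_d.-1 -> int})%type.

Definition estep (d : nat) (a b : cell d) : bool :=
  (((fst b) == (fst a) + 1) && ((snd b) == (snd a)))
  || (((fst b) == (fst a)) &&
      [exists i, ((snd b) i == (snd a) i + 1) && [forall j, (j != i) ==> ((snd b) j == (snd a) j)]]).

Definition adjacent (d : nat) (a b : cell d) : bool := estep a b || estep b a.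

Definition reach (d : nat) (R : rel (cell d)) (A : {fset cell d}) (x y : cell d) : Prop :=
  x \in A /\ exists s : seq (cell d),
    [/\ path R x s, all (fun z => z \in A) s & last x s = y].

Definition polyhypercube (d : nat) (A : {fset cell d}) : Prop :=
  (exists c, c \in A) /\ forall a b, a \in A -> b \in A -> reach (@adjacent d) A a b.

Definition directed (d : nat) (A : {fset cell d}) : Prop :=
  exists2 r, r \in A & forall a, a \in A -> reach (@estep d) A r a.

Definition all_plateaus (d : nat) (A : {fset cell d}) : Prop :=
  forall c, c \in A -> exists lo hi : {ffun 'I_d.-1 -> int},
    forall y : {ffun 'I_d.-1 -> int},
      ((fst c, y) \in A) = [forall i, (lo i <= y i) && (y i <= hi i)].

Local Open Scope fset_scope.
Definition width (d : nat) (A : {fset cell d}) : nat := #|` [fset (fst c) | c : cell d in A] |.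

Definition lateral_area (d : nat) (A : {fset cell d}) : nat :=
  (\sum_(l < d.-1) #|` [fset ((fst c), (snd c) l) | c : cell d in A] |)%N.

Local Close Scope fset_scope.
(* Polyhypercubes are considered up to translation; each translation class is
   represented by its unique member whose minimum along every axis is 0. *)
Definition normalized (d : nat) (A : {fset cell d}) : Prop :=
  (forall c, c \in A -> 0 <= (fst c) /\ forall i, 0 <= (snd c) i)
  /\ (exists2 c, c \in A & (fst c) = 0)
  /\ (forall i, exists2 c, c \in A & (snd c) i = 0).

Definition dpp (d k n : nat) (A : {fset cell d}) : Prop :=
  [/\ normalized A, polyhypercube A, directed A, all_plateaus A
      & width A = k /\ lateral_area A = n].

Definition counts (d k : nat) (p : nat -> nat) : Prop :=
  forall n, exists s : seq {fset cell d},
    [/\ uniq s, forall A, A \in s <-> @dpp d k n A & size s = p n].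

(* Coefficientwise identity  (sum_n p n t^n) * (1 - t)^m = t^a  of formal
   power series in t, i.e. sum_n p n t^n = t^a / (1 - t)^m. *)
Definition gf_eq (p : nat -> nat) (a m : nat) : Prop :=
  forall n : nat,
    \sum_(j < n.+1) ((-1) ^+ j * ('C(m, j))%:Z * (p (n - j)%N)%:Z : int)
    = ((n == a) : nat)%:Z.

From mathcomp Require Import all_boot all_order all_algebra finmap zify ring.
Set Implicit Arguments. Unset Strict Implicit. Unset Printing Implicit Defensive.
Import Order.TTheory GRing.Theory Num.Theory.

(* A normalized directed plateau polyhypercube of width k is a stack of boxes:
   its layer x < k is the box [lo x, hi x] of Z^(d-1), with lo 0 = 0 and
   lo x <= lo (x+1) <= hi x, because directedness forces every layer to be
   entered from the previous one by a single step along the first axis.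
   Conversely every such stack is a directed plateau polyhypercube.  Along each
   of the d-1 transverse axes a stack is encoded bijectively by the 2k-1
   nonnegative gaps lo (x+1) - lo x, hi x - lo (x+1) (x < k-1) and
   hi (k-1) - lo (k-1), and its lateral area is k(d-1) plus the sum of all
   these gaps.  Hence p n counts the weak compositions of n - k(d-1) into
   (2k-1)(d-1) parts, whose generating function is 1/(1-t)^((2k-1)(d-1)). *)

Lemma sumn_nth (s : seq nat) n : size s <= n -> sumn s = \sum_(i < n) nth 0 s i.
Proof.
elim: s n => [|x s IH] n /=; first by rewrite big1 // => i; rewrite nth_nil.
by case: n => [|n] //; rewrite ltnS big_ord_recl => /IH ->.
Qed.

Lemma sum_nat_blocks (f : nat -> nat) p w :
  \sum_(0 <= i < p * w) f i = \sum_(0 <= l < p) \sum_(0 <= j < w) f (l * w + j).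
Proof.
elim: p => [|p IH]; first by rewrite mul0n !big_geq.
rewrite big_nat_recr //= -IH mulSnr (big_cat_nat _ (n := p * w)) ?leq_addr //=.
congr (_ + _); rewrite -{1}(add0n (p * w)) big_addn addKn.
by apply: eq_bigr => j _; rewrite addnC.
Qed.

Lemma sum_nat_pairs (F : nat -> nat) k : 0 < k ->
  \sum_(x < k) (F x.*2 + (if x.+1 < k then F x.*2.+1 else 0)) = \sum_(j < k.*2.-1) F j.
Proof.
case: k => [//|k] _; rewrite doubleS /=.
rewrite big_split /= [X in _ + X = _]big_ord_recr /= ltnn addn0.
rewrite (eq_bigr (fun i : 'I_k => F i.*2.+1)) => [|i _]; last by rewrite ltnS ltn_ord.
elim: k => [|k IH]; first by rewrite big_ord0 addn0 big_ord1 (big_ord1 _ F).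
rewrite big_ord_recr [X in _ + X]big_ord_recr /= doubleS.
by rewrite [RHS]big_ord_recr [in RHS]big_ord_recr /= -IH; lia.
Qed.

Lemma bounded_choice (T : Type) (t0 : T) (P : nat -> T -> Prop) n :
  (forall x, x < n -> exists u, P x u) -> exists f : nat -> T, forall x, x < n -> P x (f x).
Proof.
elim: n => [|n IH] Pex; first by exists (fun=> t0).
have [f Pf] := IH (fun x x_lt => Pex x (ltnW x_lt)); have [u Pu] := Pex n (ltnSn n).
exists (fun x => if x == n then u else f x) => x.
by rewrite ltnS leq_eqVlt; case: eqP => [-> | _ /Pf].
Qed.

Lemma card_Posz_iota m : #|` [fset Posz x | x in iota 0 m]|%fset = m.
Proof.
rewrite card_imfset //=; last by move=> x y [].
by rewrite undup_id ?size_iota ?iota_uniq.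
Qed.

Lemma mem_down_closed_int (X : {fset int}) :
  (forall z, z \in X -> 0 <= z)%R -> (forall x : nat, Posz x.+1 \in X -> Posz x \in X) ->
  forall x : nat, (Posz x \in X) = (x < #|` X|%fset).
Proof.
move=> X_ge0 X_pred.
have X_down x y : (y <= x)%N -> Posz x \in X -> Posz y \in X.
  elim: x => [|x IH] in y *; first by rewrite leqn0 => /eqP ->.
  by rewrite leq_eqVlt ltnS => /orP [/eqP -> // | y_le] /X_pred; exact: IH.
move=> x; apply/idP/idP => [xX | x_lt].
  have : (#|` [fset Posz y | y in iota 0 x.+1]| <= #|` X|)%fset.
    apply/fsubset_leq_card/fsubsetP => z /imfsetP [y]; rewrite mem_iota => y_lt ->.
    by apply: X_down xX; rewrite -ltnS.
  by rewrite card_Posz_iota.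
apply: contraTT x_lt => xNX; rewrite -leqNgt.
have : (#|` X| <= #|` [fset Posz y | y in iota 0 x]|)%fset.
  apply/fsubset_leq_card/fsubsetP => z zX; apply/imfsetP.
  have z_ge0 := X_ge0 z zX; exists (absz z); last by rewrite gez0_abs.
  rewrite mem_iota /= ltnNge; apply: contra xNX => x_le.
  by apply: (X_down (absz z)); rewrite ?gez0_abs.
by rewrite card_Posz_iota.
Qed.

Fixpoint compositions (m N : nat) : seq (seq nat) :=
  if m is m'.+1 then [seq i :: t | i <- iota 0 N.+1, t <- compositions m' (N - i)]
  else if N == 0 then [:: [::]] else [::].

Lemma mem_compositions m N t :
  (t \in compositions m N) = (size t == m) && (sumn t == N).
Proof.
elim: m N t => [|m IH] N t; first by case: t => [|x t]; case: N.
apply/allpairsPdep/idP => [[i [u [hi hu ->]]] | ].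
  move: hi hu; rewrite mem_iota IH => hi /andP [/eqP hs /eqP hu] /=.
  rewrite hs hu eqxx; apply/eqP; lia.
case: t => [|x t] // /andP [hs /eqP /= hN]; exists x, t; split => //.
  by rewrite in_cons mem_iota; lia.
by rewrite IH -eqSS hs /=; apply/eqP; lia.
Qed.

Lemma compositions_uniq m N : uniq (compositions m N).
Proof.
elim: m N => [|m IH] N; first by rewrite /=; case: ifP.
apply: allpairs_uniq_dep => //; first exact: iota_uniq.
by move=> [i t] [j u] _ _ /= [-> ->].
Qed.

Definition ncomp m N := size (compositions m N).

Lemma ncomp0 N : ncomp 0 N = (N == 0).
Proof. by rewrite /ncomp /=; case: N. Qed.

Lemma ncompS m N : ncomp m.+1 N = \sum_(0 <= i < N.+1) ncomp m (N - i).
Proof. by rewrite /ncomp size_allpairs_dep sumnE big_map. Qed.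

Lemma ncompS0 m : ncomp m.+1 0 = ncomp m 0.
Proof. by rewrite ncompS big_nat1. Qed.

Lemma ncompSS m N : ncomp m.+1 N.+1 = ncomp m.+1 N + ncomp m N.+1.
Proof. by rewrite !ncompS big_nat_recl // subn0 addnC. Qed.

Section BackwardDifference.
Local Open Scope ring_scope.

(* The coefficients of (1 - t)^m * \sum_n f n t^n; [gf_eq] is stated with it. *)
Definition bdiff m (f : nat -> int) n : int :=
  \sum_(j < n.+1) (-1) ^+ j * ('C(m, j))%:Z * f (n - j)%N.

Lemma bdiff0 f n : bdiff 0 f n = f n.
Proof.
rewrite /bdiff big_ord_recl /= bin0 expr0 !mul1r subn0 big1 ?addr0 // => i _.
by rewrite bin0n mulr0 mul0r.
Qed.

Lemma bdiffS0 m f : bdiff m.+1 f 0 = bdiff m f 0.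
Proof. by rewrite /bdiff !big_ord1 /= !bin0. Qed.

Lemma bdiffSS m f n : bdiff m.+1 f n.+1 = bdiff m f n.+1 - bdiff m f n.
Proof.
rewrite /bdiff big_ord_recl [in X in _ = X - _]big_ord_recl /= !bin0 -addrA.
congr (_ + _); rewrite -sumrB; apply: eq_bigr => i _ /=.
rewrite binS PoszD subSS /bump /= add1n exprS; ring.
Qed.

Lemma bdiff_ncomp m r N :
  bdiff m (fun i => (ncomp (m + r) i)%:Z) N = (ncomp r N)%:Z.
Proof.
elim: m r N => [|m IH] r [|N]; rewrite ?bdiff0 // ?bdiffS0 ?bdiffSS addSnnS !IH.
  by rewrite ncompS0.
by rewrite ncompSS PoszD addrC addKr.
Qed.

Lemma bdiff_shift m a f n :
  bdiff m (fun i => if (a <= i)%N then f (i - a)%N else 0) n =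
  if (a <= n)%N then bdiff m f (n - a) else 0.
Proof.
elim: m n => [|m IH] n; first by rewrite !bdiff0.
case: n => [|n]; first by rewrite !bdiffS0 IH.
rewrite bdiffSS !IH; case: (ltngtP a n.+1) => [| gt_an | ->].
- by rewrite ltnS => le_an; rewrite le_an subSn // bdiffSS.
- by rewrite leqNgt (ltnW gt_an) subr0.
- by rewrite ltnn subr0 subnn bdiffS0.
Qed.

Definition shifted_ncomp a m n := if (a <= n)%N then ncomp m (n - a) else 0%N.

Lemma gf_eq_shifted_ncomp a m : gf_eq (shifted_ncomp a m) a m.
Proof.
move=> n; change (bdiff m (fun i => (shifted_ncomp a m i)%:Z) n = (n == a : nat)%:Z).
have -> : bdiff m (fun i => (shifted_ncomp a m i)%:Z) n =
          bdiff m (fun i => if (a <= i)%N then (ncomp m (i - a))%:Z else 0) n.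
  by apply: eq_bigr => j _; rewrite /shifted_ncomp; case: ifP.
rewrite (bdiff_shift m a (fun j => (ncomp m j)%:Z)).
case: leqP => [le_an | lt_na]; last by rewrite ltn_eqF.
have := bdiff_ncomp m 0 (n - a); rewrite addn0 => ->.
by rewrite ncomp0 subn_eq0 eqn_leq le_an andbT.
Qed.

End BackwardDifference.

Section Reach.
Variables (d : nat) (A : {fset cell d}).
Implicit Types (R : rel (cell d)) (x y z : cell d).

Lemma reach_refl R x : x \in A -> reach R A x x.
Proof. by move=> xA; split => //; exists [::]. Qed.

Lemma reach_trans R x y z : reach R A x y -> reach R A y z -> reach R A x z.
Proof.
move=> [xA [s [xs sA <-]]] [_ [t [yt tA <-]]]; split => //; exists (s ++ t).
by rewrite cat_path all_cat last_cat xs yt sA tA.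
Qed.

Lemma reach_step R x y : x \in A -> y \in A -> R x y -> reach R A x y.
Proof. by move=> xA yA xy; split => //; exists [:: y]; rewrite /= xy yA. Qed.

Lemma reach_sym R x y : symmetric R -> reach R A x y -> reach R A y x.
Proof.
move=> symR [xA [s [xs sA <-]]]; elim: s x xA xs sA => [|z s IH] x xA /=.
  by move=> _ _; exact: reach_refl.
move=> /andP [xz zs] /andP [zA sA]; apply: reach_trans (IH z zA zs sA) _.
by apply: reach_step; rewrite // symR.
Qed.

Lemma sub_reach R R' x y : subrel R R' -> reach R A x y -> reach R' A x y.
Proof. by move=> RR' [xA [s [xs sA ys]]]; split => //; exists s; rewrite (sub_path RR'). Qed.

End Reach.

Lemma directed_polyhypercube d (A : {fset cell d}) : directed A -> polyhypercube A.
Proof.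
move=> [r rA reach_r]; split; first by exists r.
have estep_adj : subrel (@estep d) (@adjacent d) by move=> a b; rewrite /adjacent => ->.
move=> a b aA bA; apply: reach_trans (sub_reach estep_adj (reach_r b bA)).
exact/(reach_sym (fun a b => orbC _ _))/(sub_reach estep_adj)/reach_r.
Qed.

Section Monotonicity.
Local Open Scope ring_scope.
Variable d : nat.
Implicit Types (a b c : cell d) (A : {fset cell d}).

Definition cell_le a b := a.1 <= b.1 /\ forall i, a.2 i <= b.2 i.

Lemma cell_le_trans a b c : cell_le a b -> cell_le b c -> cell_le a c.
Proof.
move=> [ab1 ab2] [bc1 bc2]; split => [|i]; first exact: le_trans ab1 bc1.
exact: le_trans (ab2 i) (bc2 i).
Qed.

Lemma estep_cell_le a b : estep a b -> cell_le a b.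
Proof.
rewrite /cell_le; case/orP => [/andP [/eqP -> /eqP ->] | ].
  by split => //; rewrite lerDl.
case/andP => /eqP -> /existsP [i /andP [/eqP bi /forallP bj]].
split => // j; case: (eqVneq j i) => [-> | ji]; first by rewrite bi lerDl.
by move/implyP/(_ ji)/eqP: (bj j) => ->.
Qed.

Lemma path_cell_le a s : path (@estep d) a s -> cell_le a (last a s).
Proof.
elim: s a => [|c s IH] a /=; first by split.
by move=> /andP [ac cs]; exact: cell_le_trans (estep_cell_le ac) (IH c cs).
Qed.

Lemma reach_cell_le A a b : reach (@estep d) A a b -> cell_le a b.
Proof. by move=> [_ [s [ab _ <-]]]; exact: path_cell_le. Qed.

Lemma reach_layer_entry A r b : reach (@estep d) A r b -> b.1 != r.1 ->
  exists y : {ffun 'I_d.-1 -> int},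
    [/\ forall i, y i <= b.2 i, (b.1 - 1, y) \in A & (b.1, y) \in A].
Proof.
move=> [rA [s [rs sA <-]]]; elim: s r rA rs sA => [|c s IH] r rA /=.
  by rewrite eqxx.
move=> /andP [rc cs] /andP [cA sA] rb.
case: (eqVneq c.1 (last c s).1) => [cb | cb]; last by apply: IH; rewrite // eq_sym.
have cr : c.1 != r.1 by rewrite cb.
move: rc; rewrite /estep (negbTE cr) orbF => /andP [/eqP c1 /eqP c2].
exists c.2; split.
- by case: (path_cell_le cs).
- by rewrite -cb c1 c2 addrK -surjective_pairing.
- by rewrite -cb -surjective_pairing.
Qed.

End Monotonicity.

Section LayerBoxes.
Local Open Scope ring_scope.

Definition in_box D (lo hi y : {ffun 'I_D -> int}) : bool :=
  [forall i, lo i <= y i <= hi i].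

Lemma in_box_inj D (lo hi lo' hi' : {ffun 'I_D -> int}) :
  in_box lo hi hi -> in_box lo' hi' hi' -> in_box lo hi =1 in_box lo' hi' ->
  lo = lo' /\ hi = hi'.
Proof.
have in_box_lo (lo1 hi1 : {ffun 'I_D -> int}) : in_box lo1 hi1 hi1 -> in_box lo1 hi1 lo1.
  by move=> /forallP box; apply/forallP => i; rewrite lexx; case/andP: (box i).
move=> box box' same; have lo_in := in_box_lo _ _ box; have lo'_in := in_box_lo _ _ box'.
have /forallP lo_lo' : in_box lo hi lo' by rewrite same.
have /forallP lo'_lo : in_box lo' hi' lo by rewrite -same.
have /forallP hi_hi' : in_box lo hi hi' by rewrite same.
have /forallP hi'_hi : in_box lo' hi' hi by rewrite -same.
split; apply/ffunP => i; apply/eqP; rewrite eq_le.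
  by case/andP: (lo_lo' i) => -> _; case/andP: (lo'_lo i) => -> _.
by case/andP: (hi'_hi i) => _ ->; case/andP: (hi_hi' i) => _ ->.
Qed.

Variable d : nat.
Implicit Types (A : {fset cell d}) (y : {ffun 'I_d.-1 -> int}).

Definition incr_at y i : {ffun 'I_d.-1 -> int} := [ffun j => if j == i then y j + 1 else y j].

Lemma estep_incr_at x y i : estep (x, y) (x, incr_at y i).
Proof.
apply/orP; right; rewrite eqxx /=; apply/existsP; exists i.
rewrite ffunE !eqxx /=; apply/forallP => j; apply/implyP => ji.
by rewrite ffunE (negbTE ji).
Qed.

Lemma reach_in_box A x y1 y2 :
  (forall y, in_box y1 y2 y -> (x, y) \in A) -> in_box y1 y2 y2 ->
  reach (@estep d) A (x, y1) (x, y2).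
Proof.
move=> boxA box2.
pose dist y := (\sum_i `|y2 i - y i|)%N.
suff reach_top n y : (dist y < n)%N -> in_box y1 y2 y -> reach (@estep d) A (x, y) (x, y2).
  apply: (reach_top (dist y1).+1) => //; apply/forallP => i.
  by rewrite lexx; case/andP: (forallP box2 i).
elim: n y => [//|n IH] y dist_y box_y.
case: (pickP (fun i => y i < y2 i)) => [i lt_i | ge_y2]; last first.
  suff -> : y = y2 by exact/reach_refl/boxA.
  apply/ffunP => i; have /negbT := ge_y2 i; rewrite -leNgt => ge_i.
  by apply/eqP; rewrite eq_le ge_i andbT; case/andP: (forallP box_y i).
have box_incr : in_box y1 y2 (incr_at y i).
  apply/forallP => j; rewrite ffunE; case: eqP => [-> | _]; last exact: (forallP box_y).
  by case/andP: (forallP box_y i) => le1 _; apply/andP; split; lia.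
have dist_incr : (dist (incr_at y i) < dist y)%N.
  rewrite /dist (bigD1 i) // [X in (_ < X)%N](bigD1 i) //= ffunE eqxx.
  rewrite (eq_bigr (fun j => `|y2 j - y j|%N)) => [|j ji]; last by rewrite ffunE (negbTE ji).
  by rewrite ltn_add2r; lia.
apply: reach_trans (IH _ _ box_incr); last exact: leq_trans dist_incr _.
by apply: reach_step; [exact: boxA | exact: boxA | exact: estep_incr_at].
Qed.

End LayerBoxes.

Section Stack.
Local Open Scope ring_scope.
Variables (d k : nat) (lo hi : nat -> {ffun 'I_d.-1 -> int}).

Definition in_stack (c : cell d) : bool :=
  [&& 0 <= c.1, (absz c.1 < k)%N & in_box (lo (absz c.1)) (hi (absz c.1)) c.2].

Definition staircase : Prop :=
  [/\ forall x i, (x < k)%N -> 0 <= lo x i <= hi x i,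
      forall i, lo 0 i = 0
    & forall x i, (x.+1 < k)%N -> lo x i <= lo x.+1 i <= hi x i].

Lemma in_stack_Posz x y : in_stack (Posz x, y) = (x < k)%N && in_box (lo x) (hi x) y.
Proof. by []. Qed.

Lemma in_stack_Negz x y : in_stack (Negz x, y) = false.
Proof. by []. Qed.

Hypothesis stair : staircase.

Lemma lo_in_box x : (x < k)%N -> in_box (lo x) (hi x) (lo x).
Proof.
case: stair => box _ _ x_lt; apply/forallP => i.
by rewrite lexx; case/andP: (box x i x_lt) => _ ->.
Qed.

Lemma hi_in_box x : (x < k)%N -> in_box (lo x) (hi x) (hi x).
Proof.
case: stair => box _ _ x_lt; apply/forallP => i.
by rewrite lexx andbT; case/andP: (box x i x_lt).
Qed.

Definition stack_bound : nat := (\sum_(x < k) \sum_l absz (hi x l))%N.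

(* Every cell of the stack has its coordinates in [0, stack_bound]. *)
Definition stack_fset : {fset cell d} :=
  [fset c in [seq c <- [seq (Posz p.1, [ffun l => Posz (p.2 l)])
                        | p : 'I_k * {ffun 'I_d.-1 -> 'I_stack_bound.+1}] | in_stack c]]%fset.

Lemma mem_stack_fset c : (c \in stack_fset) = in_stack c.
Proof.
rewrite in_fset mem_filter; case stack_c: (in_stack c) => //=.
case: c stack_c => -[x|//] y; rewrite in_stack_Posz => /andP [x_lt /forallP box_y].
apply/imageP; exists (Ordinal x_lt, [ffun l => inord (absz (y l))]) => //=.
congr pair; apply/ffunP => l; rewrite !ffunE.
case: stair => box _ _; case/andP: (box x l x_lt) => lo_ge0 _.
case/andP: (box_y l) => /(le_trans lo_ge0) y_ge0 y_le.
rewrite inordK; first exact/esym/gez0_abs.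
rewrite ltnS -lez_nat gez0_abs // (le_trans y_le) //.
rewrite -(gez0_abs (le_trans y_ge0 y_le)) lez_nat.
by rewrite /stack_bound (bigD1 (Ordinal x_lt)) //= (bigD1 l) //= -addnA leq_addr.
Qed.

Variable A : {fset cell d}.
Hypothesis memA : forall c, (c \in A) = in_stack c.

Lemma stack_directed : (0 < k)%N -> directed A.
Proof.
move=> k_gt0; have loA x : (x < k)%N -> (Posz x, lo x) \in A.
  by move=> x_lt; rewrite memA in_stack_Posz x_lt lo_in_box.
have reach_lo x : (x < k)%N -> reach (@estep d) A (0, lo 0%N) (Posz x, lo x).
  elim: x => [|x IH] x_lt; first exact/reach_refl/loA.
  have x_lt' : (x < k)%N by apply: ltnW.
  (* Climb inside layer x from lo x to lo x.+1, then step to layer x.+1. *)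
  apply: reach_trans (IH x_lt') (reach_trans (_ : reach _ _ _ (Posz x, lo x.+1)) _).
    case: stair => _ _ steps; apply: reach_in_box => [y /forallP box_y|].
      rewrite memA in_stack_Posz x_lt'; apply/forallP => i.
      case/andP: (box_y i) => -> /le_trans -> //.
      by case/andP: (steps x i x_lt).
    apply/forallP => i; rewrite lexx andbT.
    by case/andP: (steps x i x_lt).
  apply: reach_step; [|exact: loA|by rewrite /estep /= -addn1 PoszD !eqxx].
  rewrite memA in_stack_Posz x_lt'; apply/forallP => i.
  by case: stair => _ _ steps; exact: (steps x i x_lt).
exists (0, lo 0%N); first exact: loA.
move=> [[x|x] y]; rewrite memA ?in_stack_Negz // in_stack_Posz => /andP [x_lt box_y].
have lo_le_y : in_box (lo x) y y.
  by apply/forallP => i; rewrite lexx andbT; case/andP: (forallP box_y i).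
apply: reach_trans (reach_lo x x_lt) (reach_in_box _ lo_le_y) => z /forallP box_z.
rewrite memA in_stack_Posz x_lt; apply/forallP => i.
by case/andP: (box_z i) => -> /le_trans ->; case/andP: (forallP box_y i).
Qed.

Lemma stack_plateaus : all_plateaus A.
Proof.
move=> [[x|x] y]; rewrite memA ?in_stack_Negz // in_stack_Posz => /andP [x_lt _].
by exists (lo x), (hi x) => z; rewrite memA in_stack_Posz x_lt.
Qed.

Lemma stack_normalized : (0 < k)%N -> normalized A.
Proof.
move=> k_gt0; have origin : (0, lo 0%N) \in A.
  by rewrite memA in_stack_Posz k_gt0 lo_in_box.
split; [|split; [by exists (0, lo 0%N)|]].
  move=> [[x|x] y]; rewrite memA ?in_stack_Negz // in_stack_Posz => /andP [x_lt box_y].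
  split => // i; case: stair => box _ _; case/andP: (box x i x_lt) => lo_ge0 _.
  by case/andP: (forallP box_y i) => /(le_trans lo_ge0).
by move=> i; exists (0, lo 0%N) => //; case: stair.
Qed.

Lemma stack_width : width A = k.
Proof.
rewrite /width; have -> : [fset c.1 | c : cell d in A]%fset = [fset Posz x | x in iota 0 k]%fset.
  apply/fsetP => z; apply/imfsetP/imfsetP => -[/= c].
    case: c => -[x|x] y; rewrite memA ?in_stack_Negz // in_stack_Posz.
    by case/andP => x_lt _ ->; exists x; rewrite // mem_iota add0n.
  rewrite mem_iota add0n => /andP [_ x_lt] ->; exists (Posz c, lo c) => //=.
  by rewrite memA in_stack_Posz x_lt lo_in_box.
exact: card_Posz_iota.
Qed.

Lemma stack_projection l :
  #|` [fset (c.1, c.2 l) | c : cell d in A]|%fset = (\sum_(x < k) `|hi x l - lo x l|.+1)%N.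
Proof.
set P := [seq (Posz x, lo x l + Posz j) | x <- iota 0 k, j <- iota 0 `|hi x l - lo x l|.+1].
have -> : [fset (c.1, c.2 l) | c : cell d in A]%fset = [fset z in P]%fset.
  apply/fsetP => z; rewrite in_fset.
  apply/imfsetP/allpairsPdep => [[[[x|x] y]] | [x [j]]]; rewrite ?memA ?in_stack_Negz //.
    rewrite in_stack_Posz => /andP [x_lt /forallP box_y] ->.
    case/andP: (box_y l) => lo_y y_hi; have lo_hi := le_trans lo_y y_hi.
    exists x, `|y l - lo x l|%N; rewrite !mem_iota !add0n !leq0n x_lt ltnS -lez_nat.
    by rewrite !gez0_abs ?subr_ge0 // lerD2r subrKC.
  rewrite !mem_iota /= => -[x_lt j_le ->].
  exists (Posz x, [ffun i => if i == l then lo x l + Posz j else lo x i]) => /=; last first.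
    by rewrite ffunE eqxx.
  rewrite memA in_stack_Posz x_lt; apply/forallP => i; rewrite ffunE.
  case: eqP => [-> | _]; last exact: (forallP (lo_in_box x_lt)).
  by case/andP: (forallP (hi_in_box x_lt) l) => lo_hi _; apply/andP; split; lia.
rewrite card_fseq undup_id; last first.
  apply: allpairs_uniq_dep => [|x _|[x j] [x' j'] _ _ /= [-> /addrI [->]]] //; exact: iota_uniq.
rewrite size_allpairs_dep sumnE big_map -(big_mkord xpredT (fun x => `|hi x l - lo x l|.+1)%N).
by rewrite /index_iota subn0; apply: eq_bigr => x _; rewrite size_iota.
Qed.

Lemma stack_dpp : (0 < k)%N ->
  dpp k (\sum_(l < d.-1) \sum_(x < k) `|hi x l - lo x l|.+1) A.
Proof.
move=> k_gt0; split; first exact: stack_normalized.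
- exact/directed_polyhypercube/stack_directed.
- exact: stack_directed.
- exact: stack_plateaus.
split; first exact: stack_width.
by apply: eq_bigr => l _; exact: stack_projection.
Qed.

End Stack.

Lemma staircase_inj d k (lo hi lo' hi' : nat -> {ffun 'I_d.-1 -> int}) :
  staircase k lo hi -> staircase k lo' hi' -> in_stack k lo hi =1 in_stack k lo' hi' ->
  forall x, (x < k)%N -> lo x = lo' x /\ hi x = hi' x.
Proof.
move=> stair stair' same x x_lt.
apply: in_box_inj (hi_in_box stair x_lt) (hi_in_box stair' x_lt) _ => y.
by have := same (Posz x, y); rewrite !in_stack_Posz x_lt.
Qed.

Section Gaps.
Variables d k : nat.

Definition ngaps := k.*2.-1.

Implicit Types (s : seq nat) (x j : nat) (l : 'I_d.-1).

(* Block l of s holds the ngaps gaps of axis l: position 2x holds lo (x+1) - lo x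
   and 2x+1 holds hi x - lo (x+1) for x < k-1, while 2(k-1) holds hi (k-1) - lo (k-1). *)
Definition gap s l j := nth 0 s (l * ngaps + j).

Definition gap_lo s x l := \sum_(j < x) gap s l j.*2.

Definition gap_hi s x l :=
  gap_lo s x l + gap s l x.*2 + (if x.+1 < k then gap s l x.*2.+1 else 0).

Definition lo_of_gaps s x : {ffun 'I_d.-1 -> int} := [ffun l => Posz (gap_lo s x l)].
Definition hi_of_gaps s x : {ffun 'I_d.-1 -> int} := [ffun l => Posz (gap_hi s x l)].

Lemma gap_lo0 s l : gap_lo s 0 l = 0.
Proof. by rewrite /gap_lo big_ord0. Qed.

Lemma gap_loS s x l : gap_lo s x.+1 l = gap_lo s x l + gap s l x.*2.
Proof. by rewrite /gap_lo big_ord_recr. Qed.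

Lemma gap_lo_le_hi s x l : gap_lo s x l <= gap_hi s x l.
Proof. by rewrite /gap_hi -addnA leq_addr. Qed.

Lemma gap_loS_le_hi s x l : x.+1 < k -> gap_lo s x.+1 l <= gap_hi s x l.
Proof. by move=> x_lt; rewrite gap_loS /gap_hi x_lt leq_addr. Qed.

Lemma staircase_gaps s : staircase k (lo_of_gaps s) (hi_of_gaps s).
Proof.
split=> [x l _ | l | x l x_lt]; rewrite !ffunE ?gap_lo0 // !lez_nat ?gap_lo_le_hi //.
by rewrite gap_loS leq_addr -gap_loS gap_loS_le_hi.
Qed.

Lemma gaps_area s : 0 < k -> size s <= d.-1 * ngaps ->
  \sum_(l < d.-1) \sum_(x < k) `|(hi_of_gaps s x l - lo_of_gaps s x l)%R|.+1 = k * d.-1 + sumn s.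
Proof.
move=> k_gt0 size_s.
have area_l l : \sum_(x < k) `|(hi_of_gaps s x l - lo_of_gaps s x l)%R|.+1 =
                k + \sum_(j < ngaps) gap s l j.
  rewrite /ngaps -sum_nat_pairs //.
  pose g x := gap s l x.*2 + (if x.+1 < k then gap s l x.*2.+1 else 0).
  rewrite (eq_bigr (fun x : 'I_k => 1 + g x)).
    by rewrite big_split /= sum_nat_const card_ord muln1.
  by move=> x _; rewrite !ffunE distnEl ?gap_lo_le_hi // /gap_hi -!addnA addKn add1n.
rewrite (eq_bigr _ (fun l _ => area_l l)) big_split /= sum_nat_const card_ord mulnC.
congr (_ + _); rewrite (sumn_nth size_s) -(big_mkord xpredT (nth 0 s)) sum_nat_blocks big_mkord.
by apply: eq_bigr => l _; rewrite big_mkord.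
Qed.

Definition stack_gap (lo hi : nat -> {ffun 'I_d.-1 -> int}) l j : nat :=
  if odd j then `|(hi j./2 l - lo j./2.+1 l)%R|
  else if j./2.+1 < k then `|(lo j./2.+1 l - lo j./2 l)%R| else `|(hi j./2 l - lo j./2 l)%R|.

Lemma gap_stack_gap s l j : j < ngaps ->
  gap s l j = stack_gap (lo_of_gaps s) (hi_of_gaps s) l j.
Proof.
rewrite /stack_gap !ffunE /ngaps => j_lt; have := odd_double_half j.
case: (odd j) => /= [|]; [rewrite add1n | rewrite add0n] => j_eq.
  have x_lt : j./2.+1 < k by lia.
  by rewrite distnEl ?gap_loS_le_hi // /gap_hi x_lt gap_loS addKn j_eq.
case: ifP => x_lt; first by rewrite distnEl gap_loS ?leq_addr // addKn j_eq.
by rewrite distnEl ?gap_lo_le_hi // /gap_hi x_lt addn0 addKn j_eq.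
Qed.

Lemma gaps_inj s s' : size s = d.-1 * ngaps -> size s' = d.-1 * ngaps ->
  (forall x, x < k -> lo_of_gaps s x = lo_of_gaps s' x /\ hi_of_gaps s x = hi_of_gaps s' x) ->
  s = s'.
Proof.
move=> size_s size_s' same; apply: (@eq_from_nth _ 0); first by rewrite size_s.
move=> i; rewrite size_s => i_lt.
have ngaps_gt0 : 0 < ngaps by move: i_lt; case: ngaps => //; rewrite muln0.
have l_lt : i %/ ngaps < d.-1 by rewrite ltn_divLR.
have j_lt : i %% ngaps < ngaps by rewrite ltn_mod.
have := gap_stack_gap s (Ordinal l_lt) j_lt; have := gap_stack_gap s' (Ordinal l_lt) j_lt.
rewrite /gap /= -divn_eq => -> ->; move: (i %% ngaps) j_lt => j j_lt.
have x_lt : j./2 < k by move: j_lt; rewrite /ngaps; lia.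
rewrite /stack_gap; case: (same _ x_lt) => -> ->; case: ifP => odd_j.
  have x1_lt : j./2.+1 < k by move: j_lt; rewrite /ngaps -(odd_double_half j) odd_j; lia.
  by case: (same _ x1_lt) => ->.
by case: ifP => // x1_lt; case: (same _ x1_lt) => ->.
Qed.

Definition gaps_of_stack (lo hi : nat -> {ffun 'I_d.-1 -> int}) : seq nat :=
  mkseq (fun i => if insub (i %/ ngaps) is Some l then stack_gap lo hi l (i %% ngaps) else 0)
        (d.-1 * ngaps).

Lemma size_gaps_of_stack lo hi : size (gaps_of_stack lo hi) = d.-1 * ngaps.
Proof. exact: size_mkseq. Qed.

Lemma gap_gaps_of_stack lo hi l j : j < ngaps ->
  gap (gaps_of_stack lo hi) l j = stack_gap lo hi l j.
Proof.
move=> j_lt; have ngaps_gt0 : 0 < ngaps by apply: leq_ltn_trans j_lt.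
rewrite /gap nth_mkseq; last by have := ltn_ord l; nia.
by rewrite divnMDl // divn_small // addn0 modnMDl modn_small // valK.
Qed.

Lemma gaps_of_stackK lo hi : staircase k lo hi -> forall x, x < k ->
  lo_of_gaps (gaps_of_stack lo hi) x = lo x /\ hi_of_gaps (gaps_of_stack lo hi) x = hi x.
Proof.
move=> [box lo0 steps]; set s := gaps_of_stack lo hi.
have lo_s x l : x < k -> Posz (gap_lo s x l) = lo x l.
  elim: x => [|x IH] x_lt; first by rewrite gap_lo0 lo0.
  rewrite gap_loS PoszD IH ?(ltnW x_lt) // gap_gaps_of_stack; last by rewrite /ngaps; lia.
  rewrite /stack_gap odd_double doubleK x_lt gez0_abs ?subrKC // subr_ge0.
  by case/andP: (steps x l x_lt).
move=> x x_lt; split; apply/ffunP => l; rewrite !ffunE; first exact: lo_s.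
rewrite /gap_hi gap_gaps_of_stack; last by rewrite /ngaps; lia.
rewrite /stack_gap odd_double doubleK; case: ifP => x1_lt; last first.
  rewrite addn0 PoszD lo_s // gez0_abs ?subrKC // subr_ge0.
  by case/andP: (box x l x_lt).
rewrite gap_gaps_of_stack; last by rewrite /ngaps; lia.
rewrite /stack_gap /= odd_double uphalf_double !PoszD lo_s //.
case/andP: (steps x l x1_lt) => lo_le lo_hi.
by rewrite !gez0_abs ?subr_ge0 // !subrKC.
Qed.

End Gaps.

Section DirectedPlateau.
Local Open Scope ring_scope.
Variables (d k : nat) (A : {fset cell d}) (r : cell d).
Hypotheses (A_normalized : normalized A) (rA : r \in A)
  (reach_r : forall a, a \in A -> reach (@estep d) A r a)
  (A_plateaus : all_plateaus A) (A_width : width A = k).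

Lemma root_origin : r.1 = 0 /\ forall i, r.2 i = 0.
Proof.
case: A_normalized => A_ge0 [[c cA c1] A_min]; case: (A_ge0 r rA) => r1_ge0 r2_ge0.
split => [|i]; apply/eqP; rewrite eq_le ?r1_ge0 ?r2_ge0 andbT.
  by rewrite -c1; case: (reach_cell_le (reach_r cA)).
by case: (A_min i) => a aA <-; case: (reach_cell_le (reach_r aA)).
Qed.

Lemma mem_layers x : (Posz x \in [fset c.1 | c : cell d in A]%fset) = (x < k)%N.
Proof.
rewrite -A_width; apply: mem_down_closed_int => [z /imfsetP [c cA ->] | {}x].
  by case: A_normalized => A_ge0 _; case: (A_ge0 c cA).
move=> /imfsetP [c cA c1]; have [r1 _] := root_origin.
have [|y [_ yA _]] := reach_layer_entry (reach_r cA); first by rewrite -c1 r1.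
by apply/imfsetP; exists (c.1 - 1, y); rewrite //= -c1 -addn1 PoszD addrK.
Qed.

Lemma layer_boxes : exists lo hi : nat -> {ffun 'I_d.-1 -> int},
  forall x, (x < k)%N ->
    in_box (lo x) (hi x) (hi x) /\ forall y, ((Posz x, y) \in A) = in_box (lo x) (hi x) y.
Proof.
pose P x (lh : {ffun 'I_d.-1 -> int} * {ffun 'I_d.-1 -> int}) :=
  in_box lh.1 lh.2 lh.2 /\ forall y, ((Posz x, y) \in A) = in_box lh.1 lh.2 y.
have [|f fP] := @bounded_choice _ ([ffun=> 0], [ffun=> 0]) P k.
  move=> x; rewrite -mem_layers => /imfsetP [c cA c1].
  have [lo [hi box]] := A_plateaus cA; exists (lo, hi); split => [|y]; last by rewrite c1 box.
  have /esym/forallP c2_in := box c.2; rewrite -surjective_pairing cA in c2_in.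
  by apply/forallP => i; rewrite lexx andbT; case/andP: (c2_in i) => /le_trans; apply.
by exists (fun x => (f x).1), (fun x => (f x).2).
Qed.

Lemma staircase_layers : exists lo hi : nat -> {ffun 'I_d.-1 -> int},
  staircase k lo hi /\ forall c, (c \in A) = in_stack k lo hi c.
Proof.
have [lo [hi boxes]] := layer_boxes; exists lo, hi.
case: A_normalized => A_ge0 _; have [r1 r2] := root_origin.
have lo_in x : (x < k)%N -> (Posz x, lo x) \in A.
  case/boxes => /forallP box ->; apply/forallP => i.
  by rewrite lexx; case/andP: (box i) => ->.
have k_gt0 : (0 < k)%N by rewrite -mem_layers; apply/imfsetP; exists r.
have mem_r : in_box (lo 0%N) (hi 0%N) r.2.
  by rewrite -(boxes 0%N k_gt0).2; move: rA; rewrite [r]surjective_pairing r1.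
split; first split => [x i x_lt | i | x i x1_lt].
- case: (boxes x x_lt) => /forallP /(_ i) /andP [lo_hi _] _.
  by case: (A_ge0 _ (lo_in x x_lt)) => _ /(_ i) ->.
- have lo0_le : lo 0%N i <= 0 by rewrite -(r2 i); case/andP: (forallP mem_r i).
  by apply/eqP; rewrite eq_le lo0_le; case: (A_ge0 _ (lo_in 0%N k_gt0)) => _ /(_ i).
- have x_lt : (x < k)%N by apply: ltnW.
  have [|y [y_le]] := reach_layer_entry (reach_r (lo_in x.+1 x1_lt)); first by rewrite r1.
  have -> : Posz x.+1 - 1 = Posz x by rewrite -addn1 PoszD addrK.
  rewrite (boxes x x_lt).2 (boxes x.+1 x1_lt).2.
  move=> /forallP /(_ i) /andP [lo_y y_hi] /forallP /(_ i) /andP [lo1_y _].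
  by rewrite (le_trans lo_y (y_le i)) (le_trans lo1_y y_hi).
move=> [[x|x] y]; last by rewrite in_stack_Negz; apply/negbTE/negP => /A_ge0 [].
rewrite in_stack_Posz; case: (ltnP x k) => [x_lt | k_le]; first by rewrite (boxes x x_lt).2.
apply/negbTE; apply: contraL k_le => xA; rewrite -ltnNge -mem_layers.
by apply/imfsetP; exists (Posz x, y).
Qed.

End DirectedPlateau.

Definition gap_stack d k (s : seq nat) : {fset cell d} :=
  stack_fset k (lo_of_gaps d k s) (hi_of_gaps d k s).

Lemma mem_gap_stack d k s c :
  (c \in gap_stack d k s) = in_stack k (lo_of_gaps d k s) (hi_of_gaps d k s) c.
Proof. exact/mem_stack_fset/staircase_gaps. Qed.

Lemma dpp_gap_stack d k s : 0 < k -> size s = d.-1 * ngaps k ->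
  dpp k (k * d.-1 + sumn s) (gap_stack d k s).
Proof.
move=> k_gt0 size_s; rewrite -gaps_area ?size_s //.
exact (stack_dpp (staircase_gaps d k s) (@mem_gap_stack d k s) k_gt0).
Qed.

Lemma gap_stack_inj d k s s' : size s = d.-1 * ngaps k -> size s' = d.-1 * ngaps k ->
  gap_stack d k s = gap_stack d k s' -> s = s'.
Proof.
move=> size_s size_s' same; apply: gaps_inj size_s size_s' _.
apply: staircase_inj (staircase_gaps _ _ _) (staircase_gaps _ _ _) _ => c.
by rewrite -!mem_gap_stack same.
Qed.

Lemma dpp_gap_stack_surj d k n (A : {fset cell d}) : dpp k n A ->
  exists2 s, size s = d.-1 * ngaps k & A = gap_stack d k s.
Proof.
case=> A_normalized _ [r rA reach_r] A_plateaus [A_width _].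
have [lo [hi [stair memA]]] := staircase_layers A_normalized rA reach_r A_plateaus A_width.
exists (gaps_of_stack k lo hi); first exact: size_gaps_of_stack.
apply/fsetP => -[[x|x] y]; rewrite mem_gap_stack memA ?in_stack_Negz // !in_stack_Posz.
by case: ltnP => // x_lt; case: (gaps_of_stackK stair x_lt) => -> ->.
Qed.

Lemma counts_shifted_ncomp d k : 0 < k ->
  counts d k (shifted_ncomp (k * d.-1) (d.-1 * ngaps k)).
Proof.
move=> k_gt0 n; set a := k * d.-1; set m := d.-1 * ngaps k.
exists (if a <= n then map (gap_stack d k) (compositions m (n - a)) else [::]); split.
- case: ifP => // _; rewrite map_inj_in_uniq ?compositions_uniq // => s s'.
  rewrite !mem_compositions => /andP [/eqP size_s _] /andP [/eqP size_s' _].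
  exact: gap_stack_inj.
- move=> A; split.
    case: ifP => // a_le /mapP [s].
    rewrite mem_compositions => /andP [/eqP size_s /eqP sum_s] ->.
    by rewrite -(subnKC a_le) -sum_s; exact: dpp_gap_stack.
  move=> dppA; have [s size_s A_eq] := dpp_gap_stack_surj dppA.
  have [_ _ _ _ [_ area]] := dppA; have [_ _ _ _ [_ area']] := dpp_gap_stack k_gt0 size_s.
  rewrite -A_eq area in area'; rewrite area' leq_addr; apply/mapP; exists s => //.
  by rewrite mem_compositions size_s addKn !eqxx.
- by rewrite /shifted_ncomp; case: ifP; rewrite ?size_map.
Qed.

Theorem proposition1 (d k : nat) (hd : (3 <= d)%N) (hk : (1 <= k)%N) :
  exists p : nat -> nat,
    counts d k p /\ p 0 = 0%N /\
    gf_eq p (k * (d - 1)) (2 * k * (d - 1) - (d - 1)).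
Proof.
have m_eq : 2 * k * (d - 1) - (d - 1) = d.-1 * ngaps k.
  by rewrite /ngaps subn1; case: k hk => // k _; rewrite doubleS /=; nia.
have a_gt0 : 0 < k * d.-1 by rewrite muln_gt0 hk -subn1 subn_gt0; apply: leq_trans hd.
rewrite m_eq subn1; exists (shifted_ncomp (k * d.-1) (d.-1 * ngaps k)).
split; first exact: counts_shifted_ncomp.
by split; [rewrite /shifted_ncomp leqNgt a_gt0 | exact: gf_eq_shifted_ncomp].
Qed.
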